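(* Let $n,d$ be positive integers and let $V=\mathbb{R}[\mathsf{x}]_{\leq d}$ be the $\mathfrak{S}_n$-module of all real polynomials of degree at most $d$ in the $\binom{n}{2}$ variables $\mathsf{x}_{ij}$, $1\le i<j\le n$. Then the multiplicity $m_{\bm{\lambda}}$ of the irreducible module $S_{\bm{\lambda}}$ in the decomposition of $V$ into irreducible $\mathfrak{S}_n$-modules is zero unless $\bm{\lambda}\geq_{\textup{lex}}(n-2d,1^{2d})$; that is, \[ V=\bigoplus_{\bm{\lambda}\geq_{\textup{lex}}(n-2d,1^{2d})} V_{\bm{\lambda}}.\]
   Context: $\mathbb{R}[\mathsf{x}]$ is the polynomial ring in the variables $\mathsf{x}_{ij}$, $1\le i<j\le n$ (write $\mathsf{x}_{ji}:=\mathsf{x}_{ij}$), and $\mathbb{R}[\mathsf{x}]_{\le d}$ is its subspace of polynomials of degree at most $d$. The symmetric group $\mathfrak{S}_n$ acts on $\mathbb{R}[\mathsf{x}]$ by ring automorphisms determined by $\mathfrak{s}\cdot\mathsf{x}_{ij}=\mathsf{x}_{\mathfrak{s}(i)\mathfrak{s}(j)}$; this preserves $\mathbb{R}[\mathsf{x}]_{\le d}$. The irreducible real $\mathfrak{S}_n$-modules are $S_{\bm{\lambda}}$, indexed by partitions $\bm{\lambda}\vdash n$. For an $\mathfrak{S}_n$-module $V$, the isotypic component $V_{\bm{\lambda}}$ is the span of all submodules of $V$ isomorphic to $S_{\bm{\lambda}}$, and $V=\bigoplus_{\bm{\lambda}\vdash n}V_{\bm{\lambda}}$ is the isotypic decomposition;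 $m_{\bm{\lambda}}$ is the number of copies of $S_{\bm{\lambda}}$ in $V$. Partitions are written as weakly decreasing sequences of positive parts; $(n-2d,1^{2d})$ denotes the hook partition with first part $n-2d$ followed by $2d$ parts equal to $1$. $\bm{\lambda}\geq_{\textup{lex}}\bm{\mu}$ means $\bm{\lambda}$ is lexicographically greater than or equal to $\bm{\mu}$ (comparing parts in order). *)

From HB Require Import structures.
From mathcomp Require Import all_boot all_algebra all_fingroup.
From mathcomp Require Import reals.
From mathcomp Require Import mpoly.

Set Implicit Arguments.
Unset Strict Implicit.
Unset Printing Implicit Defensive.
Import GRing.Theory.
Local Open Scope ring_scope.

Definition is_partition (n : nat) (lam : seq nat) : bool :=
  [&& sorted geq lam, all (fun k => 0 < k)%N lam & sumn lam == n].

Definition lex_ge (lam mu : seq nat) : Prop :=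
  lam = mu \/
  exists i : nat, (forall j, (j < i)%N -> nth 0%N lam j = nth 0%N mu j) /\
                  (nth 0%N mu i < nth 0%N lam i)%N.

Definition hook (n d : nat) : seq nat := (n - 2 * d)%N :: nseq (2 * d) 1%N.

(* Cells of the Young diagram of lam are numbered 0..n-1 in row-reading
   order; rowof/colof give the row and column of cell number k. *)
Definition rowof (lam : seq nat) (k : nat) : nat :=
  \sum_(r < size lam) (sumn (take r.+1 lam) <= k)%N.
Definition colof (lam : seq nat) (k : nat) : nat :=
  (k - sumn (take (rowof lam k) lam))%N.

(* A tableau of shape lam is given by rho : 'S_n: entry rho k in cell k.
   A tabloid is encoded as the function (entry |-> row of that entry). *)
Definition tabloid_t (n : nat) := {ffun 'I_n -> 'I_n.+1}.

Definition tabloid_of (n : nat) (lam : seq nat) (rho : 'S_n) : tabloid_t n :=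
  [ffun i => inord (rowof lam (rho^-1 i)%g)].

Definition Mmod (R : realType) (n : nat) := {ffun tabloid_t n -> R^o}.

Definition tdelta (R : realType) (n : nat) (t : tabloid_t n) : Mmod R n :=
  [ffun s => (s == t)%:R].

Definition actM (R : realType) (n : nat) (pi : 'S_n) (f : Mmod R n) : Mmod R n :=
  [ffun t : tabloid_t n => f [ffun i => t (pi i)]].

Definition colstab (n : nat) (lam : seq nat) (sigma tau : 'S_n) : bool :=
  [forall i, colof lam (sigma^-1 (tau i))%g == colof lam (sigma^-1 i)%g].

(* polytabloid e_T for the tableau T = sigma: sum over the column stabilizer
   of sgn(tau) {tau T}; the tableau tau T has entry tau (sigma k) in cell k,
   i.e. it is the tableau (sigma * tau) (mathcomp composes left to right) *)
Definition polytabloid (R : realType) (n : nat) (lam : seq nat) (sigma : 'S_n)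
  : Mmod R n :=
  \sum_(tau : 'S_n | colstab lam sigma tau)
     ((-1) ^+ odd_perm tau) *: tdelta R (tabloid_of lam (sigma * tau)%g).

Definition in_specht (R : realType) (n : nat) (lam : seq nat) (v : Mmod R n)
  : Prop :=
  exists c : 'S_n -> R, v = \sum_(sigma : 'S_n) c sigma *: polytabloid R lam sigma.

Definition pair_t (n : nat) := {A : {set 'I_n} | #|A| == 2%N}.
Definition nvars (n : nat) : nat := #|{: pair_t n}|.

Definition xvar (n : nat) (i : 'I_(nvars n)) : pair_t n := enum_val i.

Definition pairact (n : nat) (pi : 'S_n) (A : pair_t n) : pair_t n :=
  insubd A (pi @: val A).

Definition varact (n : nat) (pi : 'S_n) (a : 'I_(nvars n)) : 'I_(nvars n) :=
  enum_rank (pairact pi (xvar a)).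

Definition actP (R : realType) (n : nat) (pi : 'S_n) (p : {mpoly R[nvars n]})
  : {mpoly R[nvars n]} :=
  p \mPo [tuple 'X_(varact pi a) | a < nvars n].

Definition deg_le (R : realType) (n d : nat) (p : {mpoly R[nvars n]}) : bool :=
  (msize p <= d.+1)%N.

(* V contains a submodule isomorphic to S^lam (i.e. m_lam > 0): there is an
   injective S_n-equivariant R-linear map from S^lam into V.  (Any linear map
   defined on the subspace S^lam extends linearly to M^lam.) *)
Definition contains_copy (R : realType) (n d : nat) (lam : seq nat) : Prop :=
  exists f : {linear Mmod R n -> {mpoly R[nvars n]}},
    [/\ forall v, in_specht lam v -> deg_le d (f v),
        forall v, in_specht lam v -> f v = 0 -> v = 0
      & forall (pi : 'S_n) v, in_specht lam v -> f (actM pi v) = actP pi (f v)].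

(* Suppose lam_1 < n - 2d and let f embed S^lam into V.  The polytabloid e of
   the row-reading tableau changes sign under every transposition of two
   entries of the same column.  A monomial of degree at most d mentions at
   most 2d of the indices 1..n, so more than lam_1 indices are left alone by
   it, and by pigeonhole two of them, i and j, share a column.  The
   transposition (i j) fixes the monomial but negates f(e), so its coefficient
   in f(e) vanishes.  Hence f(e) = 0, contradicting injectivity since e != 0.
   This suffices, as lam_1 >= n - 2d already forces lam >=lex (n - 2d, 1^2d). *)

From Pilot Require Import Defs.
From mathcomp Require Import all_boot all_algebra all_fingroup.
From mathcomp Require Import reals.
From mathcomp Require Import mpoly.
From mathcomp Require Import zify.

Set Implicit Arguments.
Unset Strict Implicit.
Unset Printing Implicit Defensive.

Import GRing.Theory Num.Theory.

Lemma sumn_takeS (s : seq nat) r :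
  sumn (take r.+1 s) = (sumn (take r s) + nth 0%N s r)%N.
Proof.
elim: s r => [|x s IH] [|r] //=; first by rewrite take0 addn0.
by rewrite IH addnA.
Qed.

Lemma geq_trans : transitive geq.
Proof. by move=> y x z le_yx le_zy; apply: leq_trans le_zy le_yx. Qed.

Lemma card_bigcup_le (I T : finType) (P : pred I) (F : I -> {set T}) :
  (#|\bigcup_(i | P i) F i| <= \sum_(i | P i) #|F i|)%N.
Proof.
apply: (big_ind2 (fun (A : {set T}) k => #|A| <= k)%N); rewrite ?cards0 //.
move=> A1 k1 A2 k2 le1 le2; exact: leq_trans (leq_card_setU _ _) (leq_add le1 le2).
Qed.

Lemma sum_downclosed_pred (P : pred nat) (P_down : forall r, P r.+1 -> P r) N :
  (\sum_(r < N) P r <= N)%N /\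
  forall r, (r < N)%N -> P r = (r < \sum_(r < N) P r)%N.
Proof.
elim: N => [|N [le_sum_N sumP]]; first by rewrite big_ord0.
rewrite big_ord_recr /=.
have [PN|nPN] := boolP (P N); last first.
  rewrite addn0; split; first exact: leq_trans le_sum_N _.
  move=> r; rewrite ltnS leq_eqVlt => /orP [/eqP ->|]; last exact: sumP.
  by rewrite (negbTE nPN) ltnNge le_sum_N.
have P_lt : forall r, (r <= N)%N -> P r.
  move=> r /subnK E; move: PN; rewrite -E.
  by elim: (N - r)%N => [|k IHk] //; rewrite addSn => /P_down.
have -> : \sum_(i < N) P i = N.
  apply/eqP; rewrite eqn_leq le_sum_N -[X in (X <= _)%N]card_ord -sum1_card.
  by apply: leq_sum => i _; rewrite P_lt // ltnW.
by rewrite addn1; split => // r r_lt; rewrite P_lt // -ltnS.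
Qed.

Section Partition.
Variables (n : nat) (lam : seq nat).
Hypothesis lamP : is_partition n lam.

Let S r := sumn (take r lam).

Lemma rowof_bounds k : (k < n)%N ->
  [/\ (rowof lam k < size lam)%N, (S (rowof lam k) <= k)%N
    & (k < S (rowof lam k).+1)%N].
Proof.
move=> lt_k_n.
have sum_lam : sumn lam = n by case/and3P: lamP => _ _ /eqP.
have S_down r : (S r.+2 <= k -> S r.+1 <= k)%N.
  by apply: leq_trans; rewrite /S (sumn_takeS lam r.+1) leq_addr.
have [le_row rowP] := @sum_downclosed_pred (fun r => S r.+1 <= k)%N S_down (size lam).
rewrite /rowof; set m := \sum_(r < size lam) _ in le_row rowP *.
have lt_m : (m < size lam)%N.
  rewrite ltn_neqAle le_row andbT; apply/eqP => Em.
  case Es: (size lam) Em rowP => [|N] Em rowP.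
    by move: lt_k_n; rewrite -sum_lam; case: lam Es.
  have := rowP N (leqnn _); rewrite Em ltnSn -Es /S take_size sum_lam.
  by rewrite leqNgt lt_k_n.
split => //; last by rewrite ltnNge rowP // ltnn.
case: m lt_m rowP {le_row} => [|m] lt_m rowP; first by rewrite /S take0.
by rewrite rowP // ltnW.
Qed.

Lemma size_partition_le : (size lam <= n)%N.
Proof.
case/and3P: lamP => _ + /eqP <-.
by elim: lam => [|x s IH] //= /andP [x_gt0 /IH]; lia.
Qed.

Lemma colof_lt_head k : (k < n)%N -> (colof lam k < nth 0%N lam 0)%N.
Proof.
move=> lt_k_n; have [lt_row le_k lt_k] := rowof_bounds lt_k_n.
apply: (@leq_trans (nth 0%N lam (rowof lam k))).
  by rewrite /colof ltn_subLR // -sumn_takeS.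
case/and3P: lamP => sorted_lam _ _.
apply: (sorted_leq_nth geq_trans leqnn) => //; rewrite inE.
exact: leq_ltn_trans lt_row.
Qed.

Lemma rowof_colof_inj k k' : (k < n)%N -> (k' < n)%N ->
  rowof lam k = rowof lam k' -> colof lam k = colof lam k' -> k = k'.
Proof.
move=> lt_k lt_k' Er; rewrite /colof Er.
have [_ + _] := rowof_bounds lt_k; have [_ + _] := rowof_bounds lt_k'.
rewrite /S Er => le_k' le_k E.
by rewrite -(subnKC le_k) E subnKC.
Qed.

Lemma exists_same_column (W : {set 'I_n}) :
  (nth 0%N lam 0 < #|W|)%N ->
  exists i j, [/\ i \in W, j \in W, i != j & colof lam i = colof lam j].
Proof.
move=> lt_head_W.
pose col (x : 'I_n) : 'I_(nth 0%N lam 0) := Ordinal (colof_lt_head (ltn_ord x)).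
have : ~~ dinjectiveb col W.
  apply/negP => /dinjectiveP/card_in_imset card_im.
  by move: (max_card (col @: W)); rewrite card_im card_ord leqNgt lt_head_W.
case/dinjectivePn => i iW [j /andP [ji jW] Ecol].
by exists i, j; split => //; [rewrite eq_sym | exact: (congr1 val Ecol)].
Qed.

End Partition.

Lemma lex_ge_hook n d lam : (0 < n)%N -> (0 < d)%N -> is_partition n lam ->
  (n - 2 * d <= nth 0%N lam 0)%N -> lex_ge lam (hook n d).
Proof.
move=> n_gt0 d_gt0 /and3P [sorted_lam pos_lam /eqP sum_lam].
rewrite leq_eqVlt => /orP [/eqP E|lt_head]; last by right; exists 0%N.
case: lam E sorted_lam pos_lam sum_lam => [|a rest] /= E sorted_lam pos_lam sum_lam.
  by move: n_gt0; rewrite -sum_lam.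
case/andP: pos_lam => a_gt0 pos_rest.
have sum_rest : sumn rest = (2 * d)%N by lia.
case: rest sum_lam sum_rest sorted_lam pos_rest => [|b rest] _ sum_rest sorted_lam pos_rest.
  by move: sum_rest => /=; lia.
case/andP: pos_rest => b_gt0 pos_rest.
have [lt_1b|lt_b1|Eb] := ltngtP 1 b; [|by lia|].
  right; exists 1%N; split; first by case=> [|[]].
  by rewrite /hook /=; case: (2 * d)%N sum_rest => //= *; lia.
left; rewrite /hook E; congr (_ :: _).
have all1 : all (pred1 1%N) (b :: rest).
  rewrite /= -Eb eqxx /=.
  move: sorted_lam => /= /andP [_ /(order_path_min geq_trans)].
  rewrite -Eb => le1; apply/allP => x x_in.
  by have := allP le1 x x_in; have := allP pos_rest x x_in; rewrite /=; lia.
move/all_pred1P: all1 => E1.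
by rewrite -sum_rest E1 sumn_nseq mul1n.
Qed.

Local Open Scope ring_scope.

Section Polytabloid.
Variables (R : realType) (n : nat) (lam : seq nat).

Let e := polytabloid R lam (1 : 'S_n).

Lemma polytabloid1E (s : tabloid_t n) :
  e s = \sum_(tau : 'S_n | colstab lam 1 tau)
          (-1) ^+ odd_perm tau * (s == tabloid_of lam tau)%:R.
Proof.
rewrite /e /polytabloid sum_ffunE; apply: eq_bigr => tau _.
by rewrite !ffunE mul1g eq_sym.
Qed.

Lemma colstab1 (tau : 'S_n) :
  colstab lam 1 tau = [forall i, colof lam (tau i) == colof lam i].
Proof. by rewrite /colstab invg1; apply: eq_forallb => i; rewrite !perm1. Qed.

Lemma polytabloid1_in_specht : in_specht lam e.
Proof.
exists (fun s : 'S_n => (s == 1%g)%:R); rewrite (bigD1 1%g) //= eqxx scale1r.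
by rewrite big1 ?addr0 // => s /negbTE ->; rewrite scale0r.
Qed.

Lemma tabloid_ofM_tperm (tau : 'S_n) (i j : 'I_n) :
  tabloid_of lam (tau * tperm i j) = [ffun k => tabloid_of lam tau (tperm i j k)].
Proof. by apply/ffunP => k; rewrite !ffunE invMg permM tpermV. Qed.

(* Plain [actM] would resolve to fingroup's action morphism. *)
Lemma actM_tperm_polytabloid1 (i j : 'I_n) :
  i != j -> colof lam i = colof lam j -> Defs.actM (tperm i j) e = - e.
Proof.
move=> neq_ij col_ij; set t := tperm i j.
have col_t x : colof lam (t x) = colof lam x by rewrite /t; case: tpermP => // ->.
apply/ffunP => s; rewrite ffunE [RHS]ffunE !polytabloid1E -sumrN.
rewrite (reindex_inj (mulIg t)) /=.
apply: eq_big => [tau|tau _].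
  by rewrite !colstab1; apply: eq_forallb => x; rewrite permM col_t.
rewrite odd_permM odd_tperm neq_ij tabloid_ofM_tperm.
have -> : ([ffun k => s (t k)] == [ffun k => tabloid_of lam tau (t k)])
          = (s == tabloid_of lam tau).
  apply/eqP/eqP => [E|->] //; apply/ffunP => k.
  by have := congr1 (fun g : tabloid_t n => g (t k)) E; rewrite !ffunE tpermK.
by rewrite addbT; case: (odd_perm tau); rewrite ?expr0 ?expr1 ?mulN1r ?mul1r ?opprK.
Qed.

Hypothesis lamP : is_partition n lam.

Lemma polytabloid1_at_tabloid1 : e (tabloid_of lam 1) = 1.
Proof.
rewrite polytabloid1E (bigD1 1%g); last by rewrite colstab1; apply/forallP => x; rewrite perm1.
rewrite odd_perm1 expr0 eqxx mul1r [X in _ + X = _]big1 ?addr0 // => tau /andP [col_tau tau_neq1].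
case: eqP => [E|_]; last by rewrite mulr0.
(* tau keeps every entry in its row and in its column, hence fixes it *)
case/eqP: tau_neq1; apply/permP => k; rewrite perm1.
have row_lt (x : 'I_n) : (rowof lam x < n.+1)%N.
  have [lt_row _ _] := rowof_bounds lamP (ltn_ord x).
  by rewrite ltnS ltnW // (leq_trans lt_row) // size_partition_le.
have := congr1 (fun g : tabloid_t n => val (g (tau k))) E.
rewrite /= !ffunE !inordK // invg1 perm1 permK => Erow.
move: col_tau; rewrite colstab1 => /forallP /(_ k) /eqP Ecol.
by apply: val_inj; apply: (rowof_colof_inj lamP) => //; apply: ltn_ord.
Qed.

End Polytabloid.

Section PolynomialAction.
Variables (R : realType) (n : nat).

Lemma pairact_val (pi : 'S_n) (A : pair_t n) : val (pairact pi A) = pi @: val A.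
Proof.
rewrite /pairact val_insubd card_imset; last exact: perm_inj.
by rewrite (valP A).
Qed.

Lemma varact_inj (pi : 'S_n) : injective (varact pi).
Proof.
move=> a b /enum_rank_inj E; apply: enum_val_inj; apply: val_inj.
by apply: (imset_inj (@perm_inj _ pi)); rewrite -!pairact_val E.
Qed.

Lemma actP_msym (pi : 'S_n) (p : {mpoly R[nvars n]}) :
  actP pi p = msym (perm (@varact_inj pi)) p.
Proof.
rewrite -[RHS]comp_mpoly_id msym_mPo /actP; congr (_ \mPo _).
by apply: eq_mktuple => a; rewrite tnth_mktuple permE.
Qed.

Lemma varact_fix (pi : 'S_n) (a : 'I_(nvars n)) :
  {in val (xvar a), pi =1 id} -> varact pi a = a.
Proof.
move=> pi_fix; rewrite /varact -[RHS]enum_valK; congr enum_rank.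
apply: val_inj; rewrite pairact_val -[RHS]imset_id.
exact: eq_in_imset.
Qed.

Definition mnm_indices (m : 'X_{1..nvars n}) : {set 'I_n} :=
  \bigcup_(a | m a != 0%N) val (xvar a).

Lemma card_mnm_indices (m : 'X_{1..nvars n}) :
  (#|mnm_indices m| <= 2 * mdeg m)%N.
Proof.
apply: leq_trans (card_bigcup_le _ _) _.
rewrite mdegE big_distrr /= big_mkcond /=; apply: leq_sum => a _.
by case: ifP => // m_a; rewrite (eqP (valP (xvar a))); lia.
Qed.

Lemma mcoeff_actP_fix (pi : 'S_n) (p : {mpoly R[nvars n]}) m :
  {in mnm_indices m, pi =1 id} -> (actP pi p)@_m = p@_m.
Proof.
move=> pi_fix.
have fixed a : m a != 0%N -> varact pi a = a.
  move=> m_a; apply: varact_fix => x x_a; apply: pi_fix.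
  by apply/bigcupP; exists a.
rewrite actP_msym mcoeff_sym; congr (p@_ _); apply/mnmP => a; rewrite mnmE permE.
have [m_a|m_a] := eqVneq (m a) 0%N; last by rewrite fixed.
rewrite m_a; have [//|m_pa] := eqVneq (m (varact pi a)) 0%N.
by move: (m_pa); rewrite (varact_inj (fixed _ m_pa)) m_a.
Qed.

Lemma mcoeff_eq0_antisym (pi : 'S_n) (p : {mpoly R[nvars n]}) m :
  actP pi p = - p -> {in mnm_indices m, pi =1 id} -> p@_m = 0.
Proof.
move=> anti pi_fix; have := mcoeff_actP_fix p pi_fix.
rewrite anti mcoeffN => /eqP; rewrite eq_sym -subr_eq0 opprK -mulr2n.
by rewrite mulrn_eq0 => /orP [] /eqP.
Qed.

End PolynomialAction.

Theorem theorem2p4 (R : realType) (n d : nat) :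
  (0 < n)%N -> (0 < d)%N ->
  forall lam : seq nat, is_partition n lam ->
    contains_copy R n d lam -> lex_ge lam (hook n d).
Proof.
move=> n_gt0 d_gt0 lam lamP [f [f_deg f_inj f_equiv]].
have [|lt_head] := leqP (n - 2 * d) (nth 0%N lam 0); first exact: lex_ge_hook.
have e_specht := @polytabloid1_in_specht R n lam.
set e := polytabloid R lam 1 in e_specht.
suff fe0 : f e = 0.
  have := congr1 (fun v : Mmod R n => v (tabloid_of lam 1)) (f_inj e e_specht fe0).
  by rewrite polytabloid1_at_tabloid1 // ffunE => /eqP; rewrite oner_eq0.
apply/mpolyP => m; rewrite mcoeff0.
have [m_supp|] := boolP (m \in msupp (f e)); last exact: memN_msupp_eq0.
have deg_m : (mdeg m <= d)%N.
  exact: leq_trans (msize_mdeg_lt m_supp) (f_deg e e_specht).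
have [|i [j [iW jW neq_ij col_ij]]] := exists_same_column lamP (W := ~: mnm_indices m).
  by have := card_mnm_indices m; have := cardsC (mnm_indices m); rewrite card_ord; lia.
apply: (@mcoeff_eq0_antisym _ _ (tperm i j)).
  by rewrite -f_equiv // actM_tperm_polytabloid1 // linearN.
by move=> x x_m; apply: tpermD; apply: contraTneq x_m => <-; rewrite -in_setC.
Qed.
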